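(* Suppose the probability measure $pr$ satisfies: for every $B\in\Delta$ and all distinct objects $a,b\in U\setminus\mathrm{inds}_B$, $$pr(F\bar G_b\mid FG_a\wedge B)\le pr(F\bar G_b\mid B).$$ Then for every object $a\in U$ and every $D\in\delta$ that determines neither $FG_a$ nor $H$, Nicod's condition holds: $$pr(H\mid FG_a\wedge D)>pr(H\mid D).$$
   Context: Fix an integer $N\ge 1$, the universe $U=\{1,\dots,N\}$ of distinct objects, and two monadic predicates $F,G$. For an object $b$ write $F_b$ (''$b$ is $F$''), $G_b$, and $F{\to}G_b:=F_b\to G_b$, $F\bar G_b:=F_b\wedge\neg G_b$, $FG_b:=F_b\wedge G_b$, $\bar FG_b:=\neg F_b\wedge G_b$, $\bar F\bar G_b:=\neg F_b\wedge\neg G_b$. For a 1-place predicate $\psi$ and objects $b_1,\dots,b_n$ write $\psi_{b_1:b_n}:=\psi_{b_1}\wedge\dots\wedge\psi_{b_n}$ (the tautology $\top$ if the list is empty). The hypothesis is $H:=\bigwedge_{b\in U}(F_b\to G_b)$. The sample space $\Omega$ is the set of complete description vectors, i.e. all truth assignments to the atoms $F_b,G_b$ ($b\in U$); a proposition $\rho$ is identified with the event $\{o\in\Omega:o\models\rho\}$, $pr$ is a probability measure on the power set of $\Omega$, and $pr(\rho)$ denotes the probability of that event. Standing assumption (Cournot's principle): $0<pr(\rho)<1$ for every proposition $\rho$ that is neither valid nor unsatisfiable. A proposition $D$ determines $\rho$ if $D\models\rho$ or $D\models\neg\rho$. $\Delta$ is the set of consistent propositions logically equivalent to a conjunction $\bigwedge_{x=1}^{k}\psi^x_{b_x}$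 ($k\ge 0$) with $b_1,\dots,b_k\in U$ pairwise distinct and each $\psi^x$ one of the predicates $F,\neg F,G,\neg G,\bar F\bar G,\neg\bar F\bar G,\bar FG,\neg\bar FG,F\bar G,F{\to}G,FG,\neg FG$; for such $\rho$, $\mathrm{inds}_\rho:=\{b_1,\dots,b_k\}$ (so $\top\in\Delta$ with $\mathrm{inds}_\top=\emptyset$). $\delta\subseteq\Delta$ is the set of such conjunctions in which every $\psi^x\in\{\bar F\bar G,\bar FG,FG\}$ (complete descriptions of some objects, none of them a counterexample to $H$). *)

From HB Require Import structures.
From mathcomp Require Import all_boot all_order all_algebra.
Set Implicit Arguments. Unset Strict Implicit. Unset Printing Implicit Defensive.
Import Order.TTheory GRing.Theory Num.Theory.
Local Open Scope ring_scope.

(* Objects 1..N are represented by 'I_N.  A complete description vector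
   assigns to each object b the pair (F_b, G_b). *)
Definition Omega (N : nat) := {ffun 'I_N -> bool * bool}.

(* The twelve 1-place predicates allowed in conjunctions of Delta. *)
Inductive pcode :=
| PF | PnF | PG | PnG
| PnFnG | PnotnFnG
| PnFG | PnotnFG
| PFnG | PFimpG
| PFG | PnotFG.

Definition interp (p : pcode) (x : bool * bool) : bool :=
  let f := x.1 in let g := x.2 in
  match p with
  | PF => f | PnF => ~~ f | PG => g | PnG => ~~ g
  | PnFnG => ~~ f && ~~ g | PnotnFnG => ~~ (~~ f && ~~ g)
  | PnFG => ~~ f && g | PnotnFG => ~~ (~~ f && g)
  | PFnG => f && ~~ g | PFimpG => f ==> g
  | PFG => f && g | PnotFG => ~~ (f && g)
  end.

(* A conjunction over pairwise distinct objects is given by a partial map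
   c : object -> predicate; inds = {b | c b <> None}. Its event: *)
Definition conj_ev (N : nat) (c : 'I_N -> option pcode) : {set Omega N} :=
  [set o : Omega N | [forall b : 'I_N, if c b is Some p then interp p (o b) else true]].

Definition FG_ev (N : nat) (a : 'I_N) : {set Omega N} :=
  [set o : Omega N | (o a).1 && (o a).2].
Definition FnG_ev (N : nat) (b : 'I_N) : {set Omega N} :=
  [set o : Omega N | (o b).1 && ~~ (o b).2].
Definition H_ev (N : nat) : {set Omega N} :=
  [set o : Omega N | [forall b : 'I_N, (o b).1 ==> (o b).2]].

(* D is in delta: a conjunction of complete non-counterexample descriptions. *)
Definition in_delta (N : nat) (D : {set Omega N}) : Prop :=
  exists c : 'I_N -> option pcode,
    D = conj_ev c /\
    forall b p, c b = Some p -> p = PnFnG \/ p = PnFG \/ p = PFG.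

Definition determines (N : nat) (D rho : {set Omega N}) : Prop :=
  D \subset rho \/ D \subset ~: rho.

Definition pr (R : realFieldType) (N : nat) (w : Omega N -> R) (E : {set Omega N}) : R :=
  \sum_(o in E) w o.

Definition is_prob (R : realFieldType) (N : nat) (w : Omega N -> R) : Prop :=
  (forall o, 0 <= w o) /\ \sum_(o : Omega N) w o = 1.

Definition cournot (R : realFieldType) (N : nat) (w : Omega N -> R) : Prop :=
  forall E : {set Omega N}, E != set0 -> E != setT -> 0 < pr w E < 1.

Definition cond (R : realFieldType) (N : nat) (w : Omega N -> R) (A B : {set Omega N}) : R :=
  pr w (A :&: B) / pr w B.

From HB Require Import structures.
From mathcomp Require Import all_boot all_order all_algebra.
From mathcomp Require Import lra.
Set Implicit Arguments. Unset Strict Implicit. Unset Printing Implicit Defensive.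
Import Order.TTheory GRing.Theory Num.Theory.
Local Open Scope ring_scope.

(* Let D be a conjunction of complete non-counterexample descriptions that
   does not determine FG_a; then a is undescribed by D.  List the remaining
   undescribed objects b_1, ..., b_k (all different from a) and put
   E_j := D /\ (F->G)_{b_1} /\ ... /\ (F->G)_{b_j}.  Each E_j is again a
   conjunction of the allowed kind and E_{j+1} = E_j \ F~G_{b_{j+1}}, so the
   hypothesis applied to B := E_j gives pr(FG_a | E_j) <= pr(FG_a | E_{j+1})
   (lemma [cond_setD_ge]); hence pr(FG_a | D) <= pr(FG_a | E_k).  Moreover
   H /\ FG_a /\ D = FG_a /\ E_k, and H /\ D is a proper subevent of E_k (the
   witness makes a a counterexample), so Cournot's principle gives
   pr(H /\ D) < pr(E_k).  Rearranging these two inequalities is the claim. *)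

(* Exchanging the roles of numerators and denominators in a ratio
   inequality; this turns pr(FG_a|D) <= pr(FG_a|E) into the final claim. *)
Lemma ratio_lt_exchange (R : realFieldType) (d e h x y : R) :
  0 < d -> 0 < e -> 0 < y -> h < y -> e / d <= x / y -> h / d < x / e.
Proof.
move=> d_gt0 e_gt0 y_gt0 h_lt_y.
rewrite ler_pdivrMr // mulrAC ler_pdivlMr // => exch.
rewrite ltr_pdivrMr // mulrAC ltr_pdivlMr //.
by apply: lt_le_trans exch; rewrite mulrC ltr_pM2l.
Qed.

Section Probability.
Variables (R : realFieldType) (N : nat) (w : Omega N -> R).

Lemma pr_split (A B : {set Omega N}) : pr w A = pr w (A :&: B) + pr w (A :\: B).
Proof. by rewrite /pr (big_setID B). Qed.

Hypotheses (hw : is_prob w) (hC : cournot w).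

Lemma pr_pos (E : {set Omega N}) : E != set0 -> 0 < pr w E.
Proof.
move=> E_n0; have [->|E_nT] := eqVneq E setT; last by case/andP: (hC E_n0 E_nT).
have -> : pr w setT = 1 by rewrite -hw.2 /pr; apply: eq_bigl => o; rewrite inE.
exact: ltr01.
Qed.

Lemma pr_proper_lt (A B : {set Omega N}) : A \proper B -> pr w A < pr w B.
Proof.
case/properP=> /setIidPr AB [o oB oA].
rewrite (pr_split B A) AB ltrDl; apply: pr_pos.
by apply/set0Pn; exists o; rewrite inE oB oA.
Qed.

(* Writing
   pr(A/\E) = u + p and pr(E) = v + q (split along X) both inequalities say
   u q <= v p. *)
Lemma cond_setD_ge (A E X : {set Omega N}) :
  0 < pr w (A :&: E) -> 0 < pr w E -> 0 < pr w (E :\: X) ->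
  cond w X (A :&: E) <= cond w X E -> cond w A E <= cond w A (E :\: X).
Proof.
move=> pAE pE pEX; rewrite /cond setIDA (setIC X) (setIC X E).
rewrite (pr_split (A :&: E) X) (pr_split E X) in pAE pE *.
set u := pr w (_ :&: X); set p := pr w (_ :\: X); set v := pr w (E :&: X).
set q := pr w (E :\: X).
rewrite ler_pdivrMr // mulrAC ler_pdivlMr // => h.
rewrite ler_pdivrMr // mulrAC ler_pdivlMr //; nra.
Qed.

End Probability.

Section Descriptions.
Variables (N : nat) (c : 'I_N -> option pcode).

Definition FimpG_on (s : seq 'I_N) : {set Omega N} :=
  [set o : Omega N | all (fun b => (o b).1 ==> (o b).2) s].

Lemma FimpG_on_nil : FimpG_on [::] = setT.
Proof. by apply/setP => o; rewrite !inE. Qed.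

Lemma FimpG_on_cons b s : FimpG_on (b :: s) = FimpG_on s :\: FnG_ev b.
Proof.
apply/setP => o; rewrite !inE /=.
by case: (o b) => [[] []].
Qed.

Definition relax (s : seq 'I_N) : 'I_N -> option pcode :=
  fun b => if b \in s then Some PFimpG else c b.

Lemma relax_ev s : {in s, forall b, c b = None} ->
  conj_ev (relax s) = conj_ev c :&: FimpG_on s.
Proof.
move=> s_undescr; apply/setP => o; rewrite !inE /relax.
apply/forallP/andP => [h | [/forallP hc /allP hs] b].
  split; last by apply/allP => b bs; have := h b; rewrite bs.
  by apply/forallP => b; have := h b; case: ifP => // /s_undescr ->.
by case: ifP => [/hs | _]; [ | exact: hc].
Qed.

Hypothesis c_delta : forall b p, c b = Some p -> p = PnFnG \/ p = PnFG \/ p = PFG.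

Lemma described_FimpG o b p : o \in conj_ev c -> c b = Some p -> (o b).1 ==> (o b).2.
Proof.
rewrite inE => /forallP /(_ b) + cb; rewrite cb.
by case: (c_delta cb) => [->|[->|->]] /=; case: (o b) => [[] []].
Qed.

Lemma undetermined_undescribed a : ~ determines (conj_ev c) (FG_ev a) -> c a = None.
Proof.
case ca: (c a) => [p|] // undet; exfalso; apply: undet.
have hD o : o \in conj_ev c -> interp p (o a) by rewrite inE => /forallP /(_ a); rewrite ca.
case: (c_delta ca) => [|[|]] hp; subst p; [right|right|left]; apply/subsetP => o /hD;
  by rewrite !inE /=; case: (o a) => [[] []].
Qed.

(* The description vector following c and making every undescribed object FG;
   it witnesses that all events of the argument are satisfiable. *)
Definition completion : Omega N :=
  [ffun b => match c b with
             | Some PnFnG => (false, false) | Some PnFG => (false, true)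
             | _ => (true, true) end].

Lemma completion_conj : completion \in conj_ev c.
Proof.
rewrite inE; apply/forallP => b; rewrite ffunE; case cb: (c b) => [p|] //.
by case: (c_delta cb) => [|[|]] ->.
Qed.

Lemma completion_FimpG s : completion \in FimpG_on s.
Proof. by rewrite inE; apply/allP => b _; rewrite ffunE; case: (c b) => [[]|]. Qed.

Lemma completion_relaxed s : completion \in conj_ev c :&: FimpG_on s.
Proof. by rewrite in_setI completion_conj completion_FimpG. Qed.

Section OneObject.
Variables (a : 'I_N).
Hypothesis ca : c a = None.

Lemma completion_FG : completion \in FG_ev a.
Proof. by rewrite inE ffunE ca. Qed.

Definition counterexample : Omega N :=
  [ffun b => if b == a then (true, false) else completion b].

Lemma counterexample_mem s : a \notin s ->
  counterexample \in (conj_ev c :&: FimpG_on s) :\: H_ev N.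
Proof.
move=> a_s; have := completion_conj; rewrite inE => /forallP hD.
have := completion_FimpG s; rewrite inE => /allP hs.
rewrite !inE; apply/and3P; split.
- by apply/forallPn; exists a; rewrite ffunE eqxx.
- apply/forallP => b; rewrite ffunE; case: eqVneq => [->|_]; [by rewrite ca | exact: hD].
- apply/allP => b bs; rewrite ffunE; case: eqVneq => [ba|_]; last exact: hs.
  by rewrite -ba bs in a_s.
Qed.

Definition others : seq 'I_N := enum [set b | ~~ isSome (c b) & b != a].

Lemma mem_others b : (b \in others) = ~~ isSome (c b) && (b != a).
Proof. by rewrite mem_enum inE. Qed.

Lemma others_undescribed : {in others, forall b, c b = None /\ b != a}.
Proof. by move=> b; rewrite mem_others; case: (c b) => //= _ ->. Qed.

Lemma H_FG_relaxed :
  H_ev N :&: (FG_ev a :&: conj_ev c) = FG_ev a :&: (conj_ev c :&: FimpG_on others).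
Proof.
apply/setP => o; rewrite !in_setI.
case oa: (o \in FG_ev a); last by rewrite /= andbF.
case oD: (o \in conj_ev c); last by rewrite /= andbF.
rewrite !inE /= andbT.
apply/forallP/allP => [hH b _ | hs b]; first exact: hH.
case cb: (c b) => [p|]; first exact: described_FimpG oD cb.
case: (eqVneq b a) => [->|ba]; first by move: oa; rewrite inE => /andP [-> ->].
by apply: hs; rewrite mem_others cb ba.
Qed.

Lemma H_relaxed_proper :
  H_ev N :&: conj_ev c \proper conj_ev c :&: FimpG_on others.
Proof.
apply/properP; split.
  apply/subsetP => o /setIP [oH oD]; rewrite in_setI oD inE.
  by apply/allP => b _; move: oH; rewrite inE => /forallP.
have a_others : a \notin others by rewrite mem_others eqxx andbF.
have /setDP [mem notH] := counterexample_mem a_others.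
by exists counterexample; rewrite // inE negb_and notH.
Qed.

End OneObject.
End Descriptions.

Section NicodCondition.
Variables (R : realFieldType) (N : nat) (w : Omega N -> R).
Hypotheses (hw : is_prob w) (hC : cournot w).
Hypothesis instance_lowers_counterexample :
  forall (B : {set Omega N}) (c : 'I_N -> option pcode),
    B = conj_ev c -> B != set0 ->
    forall a b : 'I_N, a != b -> c a = None -> c b = None ->
      cond w (FnG_ev b) (FG_ev a :&: B) <= cond w (FnG_ev b) B.
Variables (c : 'I_N -> option pcode) (a : 'I_N).
Hypotheses (c_delta : forall b p, c b = Some p -> p = PnFnG \/ p = PnFG \/ p = PFG)
  (ca : c a = None).

Lemma completion_pos (X : {set Omega N}) : completion c \in X -> 0 < pr w X.
Proof. by move=> cX; apply: (pr_pos hw hC); apply/set0Pn; exists (completion c). Qed.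

Lemma relax_cond_ge s : uniq s -> {in s, forall b, c b = None /\ b != a} ->
  cond w (FG_ev a) (conj_ev c) <= cond w (FG_ev a) (conj_ev c :&: FimpG_on s).
Proof.
elim: s => [|b s IH] /=; first by rewrite FimpG_on_nil setIT.
case/andP => b_s s_uniq s_ok.
have [cb ba] := s_ok b (mem_head b s).
have {}s_ok : {in s, forall b, c b = None /\ b != a}.
  by move=> b' b's; apply: s_ok; rewrite in_cons b's orbT.
have a_s : a \notin s by apply/negP => /s_ok []; rewrite eqxx.
apply: le_trans (IH s_uniq s_ok) _.
set E := conj_ev c :&: FimpG_on s.
have E_relax : E = conj_ev (relax c s) by rewrite relax_ev // => b' /s_ok [].
have completion_E : completion c \in E by apply: completion_relaxed.
rewrite FimpG_on_cons setIDA; apply: cond_setD_ge.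
- by apply: completion_pos; rewrite in_setI completion_FG.
- exact: completion_pos.
- by apply: completion_pos; rewrite -setIDA -FimpG_on_cons completion_relaxed.
- apply: (instance_lowers_counterexample E_relax); first by apply/set0Pn; exists (completion c).
  + by rewrite eq_sym.
  + by rewrite /relax (negbTE a_s).
  + by rewrite /relax (negbTE b_s).
Qed.

End NicodCondition.

Theorem theorem1 (R : realFieldType) (N : nat) (hN : (0 < N)%N)
  (w : Omega N -> R) (hw : is_prob w) (hC : cournot w)
  (hyp : forall (B : {set Omega N}) (c : 'I_N -> option pcode),
      B = conj_ev c -> B != set0 ->
      forall a b : 'I_N, a != b -> c a = None -> c b = None ->
        cond w (FnG_ev b) (FG_ev a :&: B) <= cond w (FnG_ev b) B)
  (a : 'I_N) (D : {set Omega N}) (hD : in_delta D)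
  (h1 : ~ determines D (FG_ev a)) (h2 : ~ determines D (H_ev N)) :
  cond w (H_ev N) (FG_ev a :&: D) > cond w (H_ev N) D.
Proof.
case: hD => c [D_eq c_delta]; subst D.
have ca := undetermined_undescribed c_delta h1.
have chain := relax_cond_ge hw hC hyp c_delta ca (enum_uniq _) (@others_undescribed _ c a).
have H_lt := pr_proper_lt hw hC (H_relaxed_proper c_delta ca).
have pos := completion_pos hw hC (c := c).
rewrite /cond (H_FG_relaxed c_delta a); apply: ratio_lt_exchange H_lt chain.
- by apply: pos; rewrite completion_conj.
- by apply: pos; rewrite in_setI completion_FG // completion_conj.
- exact/pos/completion_relaxed.
Qed.
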